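(* Let $Y_1,Y_2\subseteq Y$ and $Z_1,Z_2\subseteq Z$ with $Y_1\cap Y_2=\emptyset$ and $Z_1\cap Z_2=\emptyset$. Let $f\in\mathbb{F}[Y_1,Z_1]$ and $g\in\mathbb{F}[Y_2,Z_2]$. Then $\mathrm{maxrank}(M_{fg})=\mathrm{maxrank}(M_f)\cdot\mathrm{maxrank}(M_g)$.
   Context: $\mathbb{F}$ is a field, $Y=\{y_1,\dots,y_m\}$ and $Z=\{z_1,\dots,z_m\}$ are disjoint sets of variables. For $f\in\mathbb{F}[Y,Z]$, the polynomial coefficient matrix $M_f$ is the $2^m\times 2^m$ matrix with entries in $\mathbb{F}[Y,Z]$, rows indexed by monic multilinear monomials $p$ in $Y$ and columns by monic multilinear monomials $q$ in $Z$, where $M_f(p,q)=G$ if and only if $f$ can be uniquely written as $f=pq\,G+Q$ with $G$ containing no variable other than those present in $p$ and $q$, and $Q$ having no monomial which is divisible by $pq$ and contains only variables present in $p$ and $q$. For $S:Y\cup Z\to\mathbb{F}$, $M_f|_S$ is obtained by evaluating each entry at $S$, and $\mathrm{maxrank}(M_f)=\max_S\mathrm{rank}(M_f|_S)$. *)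

From mathcomp Require Import all_boot all_algebra.
From mathcomp Require Import mpoly.
From Stdlib Require Import ClassicalDescription.

Set Implicit Arguments.
Unset Strict Implicit.
Unset Printing Implicit Defensive.

Import GRing.Theory.
Local Open Scope ring_scope.

(* Variables: Y = {y_0..y_(m-1)} are the variables 'X_(lshift m i) and
   Z = {z_0..z_(m-1)} are the variables 'X_(rshift m j) of {mpoly F[m + m]}. *)

Definition varset (m : nat) (A B : {set 'I_m}) : {set 'I_(m + m)} :=
  [set lshift m i | i in A] :|: [set rshift m j | j in B].

(* The monic multilinear monomial prod_{x in S} x, as an exponent vector. *)
Definition ind_mnm (n : nat) (S : {set 'I_n}) : 'X_{1..n} :=
  [multinom (i \in S : nat) | i < n].

Definition poly_in_vars (F : fieldType) (m : nat) (A B : {set 'I_m})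
    (f : {mpoly F[m + m]}) : Prop :=
  forall a : 'X_{1..m + m}, a \in msupp f ->
    forall i : 'I_(m + m), i \notin varset A B -> a i = 0%N.

(* Entry M_f(p, q) for p = prod_{i in A} y_i, q = prod_{j in B} z_j.
   Writing f = pq G + Q with G only in the variables of pq and Q having no
   monomial divisible by pq using only the variables of pq, G is exactly the
   sum over the monomials x^a of f whose support is exactly the variable set
   of pq, of f_a * x^a / (pq). *)
Definition pcm_entry (F : fieldType) (m : nat) (f : {mpoly F[m + m]})
    (A B : {set 'I_m}) : {mpoly F[m + m]} :=
  let S := varset A B in
  \sum_(a <- msupp f | [forall i, (0 < a i)%N == (i \in S)])
     f@_a *: 'X_[mnm_sub a (ind_mnm S)].

(* The polynomial coefficient matrix M_f, rows indexed by the monic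
   multilinear monomials in Y (subsets of 'I_m), columns by those in Z. *)
Definition pcm (F : fieldType) (m : nat) (f : {mpoly F[m + m]}) :
    'M[{mpoly F[m + m]}]_(#|{set 'I_m}|) :=
  \matrix_(i, j) pcm_entry f (enum_val i) (enum_val j).

Definition pcm_eval (F : fieldType) (m : nat) (f : {mpoly F[m + m]})
    (v : 'I_(m + m) -> F) : 'M[F]_(#|{set 'I_m}|) :=
  map_mx (meval v) (pcm f).

Definition rank_realized (F : fieldType) (m : nat) (f : {mpoly F[m + m]})
    (k : nat) : bool :=
  if excluded_middle_informative
       (exists v : 'I_(m + m) -> F, \rank (pcm_eval f v) = k)
  then true else false.

(* maxrank(M_f) = max_S rank(M_f|_S)  (ranks are at most #|{set 'I_m}|). *)
Definition maxrank (F : fieldType) (m : nat) (f : {mpoly F[m + m]}) : nat :=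
  \max_(k < (#|{set 'I_m}|).+1 | rank_realized f k) k.

(* Since f and g involve disjoint sets of variables, fg is a combination of
   products x^a x^b of a monomial of f and a monomial of g, and x^a x^b has
   support exactly S iff S lies in the variables of f and g together and x^a,
   x^b have supports exactly the parts of S among the variables of f and of g.
   Hence M_fg(p, q) = M_f(p1, q1) M_g(p2, q2), where p = p1 p2 and q = q1 q2
   are split along the variables of f and of g, or 0 if p or q contains a
   variable of neither.  So after any evaluation M_fg is, up to zero rows and
   columns and a reindexing, the Kronecker product M_f (x) M_g, whose rank is
   the product of the ranks.  Finally f and g are evaluated on disjoint
   variables, so points maximizing the ranks of M_f and M_g glue together. *)

From mathcomp Require Import all_boot all_algebra.
From mathcomp Require Import mpoly ssrcomplements.
From mathcomp.real_closed Require Import mxtens.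
From mathcomp Require Import zify.
From Stdlib Require Import ClassicalDescription.

Set Implicit Arguments.
Unset Strict Implicit.
Unset Printing Implicit Defensive.
Import GRing.Theory.
Local Open Scope ring_scope.

Section VarSet.
Variable m : nat.
Implicit Types A B C D : {set 'I_m}.

Lemma mem_varsetl A B (j : 'I_m) : (lshift m j \in varset A B) = (j \in A).
Proof.
rewrite /varset inE mem_imset; last exact: lshift_inj.
case: (boolP (j \in A)) => //= _; apply/imsetP => [[k _ /(congr1 val) /= E]].
by have := ltn_ord j; rewrite E; lia.
Qed.

Lemma mem_varsetr A B (j : 'I_m) : (rshift m j \in varset A B) = (j \in B).
Proof.
rewrite /varset inE (mem_imset _ _ (@rshift_inj m m)) orbC.
case: (boolP (j \in B)) => //= _; apply/imsetP => [[k _ /(congr1 val) /= E]].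
by have := ltn_ord k; rewrite -E; lia.
Qed.

Lemma varset_subset A B C D :
  (varset A B \subset varset C D) = (A \subset C) && (B \subset D).
Proof.
apply/subsetP/andP => [sABCD | [/subsetP sAC /subsetP sBD] i].
  split; apply/subsetP => j.
    by have := sABCD (lshift m j); rewrite !mem_varsetl.
  by have := sABCD (rshift m j); rewrite !mem_varsetr.
rewrite -[i]splitK; case: (split i) => j /=.
  by rewrite !mem_varsetl; apply: sAC.
by rewrite !mem_varsetr; apply: sBD.
Qed.

Lemma varsetU A B C D : varset A B :|: varset C D = varset (A :|: C) (B :|: D).
Proof.
apply/setP => i; rewrite inE -[i]splitK.
by case: (split i) => j /=; rewrite ?mem_varsetl ?mem_varsetr inE.
Qed.

Lemma varsetI A B C D : varset A B :&: varset C D = varset (A :&: C) (B :&: D).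
Proof.
apply/setP => i; rewrite inE -[i]splitK.
by case: (split i) => j /=; rewrite ?mem_varsetl ?mem_varsetr inE.
Qed.

Lemma disjoint_varset A B C D :
  [disjoint A & C] -> [disjoint B & D] -> [disjoint varset A B & varset C D].
Proof.
by rewrite -!setI_eq0 varsetI => /eqP -> /eqP ->; rewrite /varset !imset0 setU0.
Qed.

End VarSet.

Section ExactPart.
Variables (F : fieldType) (n : nat).
Implicit Types (S V : {set 'I_n}) (a b : 'X_{1..n}) (h : {mpoly F[n]}).

Definition mnm_within V a := forall i, i \notin V -> a i = 0%N.

Definition exact_supp a S := [forall i, (0 < a i)%N == (i \in S)].

(* pcm_entry f A B is exact_part (varset A B) f, by conversion. *)
Definition exact_part S h : {mpoly F[n]} :=
  \sum_(a <- msupp h | exact_supp a S) h@_a *: 'X_[mnm_sub a (ind_mnm S)].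

Definition exact_part_mnm S a : {mpoly F[n]} :=
  if exact_supp a S then 'X_[mnm_sub a (ind_mnm S)] else 0.

Definition mlinext (G : 'X_{1..n} -> {mpoly F[n]}) h :=
  \sum_(a <- msupp h) h@_a *: G a.

Lemma exact_part_mlinext S h : exact_part S h = mlinext (exact_part_mnm S) h.
Proof.
rewrite /exact_part /mlinext big_mkcond /=; apply: eq_bigr => a _.
by rewrite /exact_part_mnm; case: ifP => _ //; rewrite scaler0.
Qed.

Section LinearExtension.
Variable G : 'X_{1..n} -> {mpoly F[n]}.

Lemma mlinext_bounded h k : (msize h <= k)%N ->
  mlinext G h = \sum_(a : 'X_{1..n < k}) h@_a *: G a.
Proof.
move=> le_hk; rewrite /mlinext (big_mksub 'X_{1..n < k}) ?msupp_uniq //=; last first.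
  by move=> a /msize_mdeg_lt /leq_trans; apply.
by rewrite big_rmcond //= => a /memN_msupp_eq0 ->; rewrite scale0r.
Qed.

Lemma mlinextD p q : mlinext G (p + q) = mlinext G p + mlinext G q.
Proof.
pose k := maxn (msize (p + q)) (maxn (msize p) (msize q)).
rewrite !(@mlinext_bounded _ k) ?leq_max ?leqnn ?orbT //.
by rewrite -big_split /=; apply: eq_bigr => a _; rewrite mcoeffD scalerDl.
Qed.

Lemma mlinextZX c a : mlinext G (c *: 'X_[a]) = c *: G a.
Proof.
have [->|c_neq0] := eqVneq c 0; first by rewrite !scale0r /mlinext msupp0 big_nil.
by rewrite /mlinext msuppMCX // big_seq1 mcoeffZ mcoeffX eqxx mulr1.
Qed.

Lemma mlinext_sum (I : Type) (r : seq I) (c : I -> F) (x : I -> 'X_{1..n}) :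
  mlinext G (\sum_(i <- r) c i *: 'X_[x i]) = \sum_(i <- r) c i *: G (x i).
Proof.
elim: r => [|y r IHr]; first by rewrite !big_nil /mlinext msupp0 big_nil.
by rewrite !big_cons mlinextD IHr mlinextZX.
Qed.

End LinearExtension.

Section DisjointSupports.
Variables (V1 V2 : {set 'I_n}) (S : {set 'I_n}) (a b : 'X_{1..n}).
Hypotheses (disV : [disjoint V1 & V2]) (subS : S \subset V1 :|: V2).
Hypotheses (a_within : mnm_within V1 a) (b_within : mnm_within V2 b).

Lemma disjoint_supports_cases (P : 'I_n -> Prop) :
  (forall i, i \in V1 -> i \notin V2 -> b i = 0%N -> P i) ->
  (forall i, i \in V2 -> i \notin V1 -> a i = 0%N -> P i) ->
  (forall i, i \notin S -> i \notin V1 -> i \notin V2 -> a i = 0%N -> b i = 0%N -> P i) ->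
  forall i, P i.
Proof.
move=> P1 P2 P0 i; have [i1 | i1] := boolP (i \in V1).
  have i2 : i \notin V2 by rewrite (disjointFr disV i1).
  exact: P1 i1 i2 (b_within i2).
have [i2 | i2] := boolP (i \in V2); first exact: P2 i2 i1 (a_within i1).
have iS : i \notin S by apply/negP => /(subsetP subS); rewrite inE (negbTE i1) (negbTE i2).
exact: P0 iS i1 i2 (a_within i1) (b_within i2).
Qed.

Lemma exact_suppD :
  exact_supp (a + b) S = exact_supp a (S :&: V1) && exact_supp b (S :&: V2).
Proof.
have eq_i : forall i, ((0 < (a + b)%MM i)%N == (i \in S)) =
    ((0 < a i)%N == (i \in S :&: V1)) && ((0 < b i)%N == (i \in S :&: V2)).
  apply: disjoint_supports_cases => [i i1 i2 bi0 | i i2 i1 ai0 | i iS i1 i2 ai0 bi0];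
    rewrite mnmDE !inE ?ai0 ?bi0 ?addn0 ?i1 ?i2 ?(negbTE i1) ?(negbTE i2)
            ?andbT ?andbF /= ?andbT //.
apply/forallP/andP => [all_ab | [/forallP all_a /forallP all_b] i].
  by split; apply/forallP => i; have := all_ab i; rewrite eq_i => /andP[].
by rewrite eq_i all_a all_b.
Qed.

Lemma mnm_sub_indD :
  mnm_sub (a + b) (ind_mnm S) =
  (mnm_sub a (ind_mnm (S :&: V1)) + mnm_sub b (ind_mnm (S :&: V2)))%MM.
Proof.
apply/mnmP; apply: disjoint_supports_cases
  => [i i1 i2 bi0 | i i2 i1 ai0 | i iS i1 i2 ai0 bi0];
  rewrite !(mnmDE, mnmBE, mnmE) !inE ?ai0 ?bi0 ?i1 ?i2 ?(negbTE i1) ?(negbTE i2) ?andbT ?andbF.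
- by rewrite sub0n !addn0.
- by rewrite sub0n !add0n.
- by rewrite (negbTE iS).
Qed.

Lemma exact_part_mnmD :
  exact_part_mnm S (a + b) =
  exact_part_mnm (S :&: V1) a * exact_part_mnm (S :&: V2) b.
Proof.
rewrite /exact_part_mnm exact_suppD.
case: (exact_supp a _); last by rewrite mul0r.
case: (exact_supp b _); last by rewrite mulr0.
by rewrite mnm_sub_indD mpolyXD.
Qed.

End DisjointSupports.

Lemma exact_part_mnm_out V a :
  mnm_within V a -> forall S, ~~ (S \subset V) -> exact_part_mnm S a = 0.
Proof.
move=> a_within S /subsetPn [i iS iV]; rewrite /exact_part_mnm.
by case: ifP => // /forallP /(_ i); rewrite iS a_within.
Qed.

Definition mpoly_within V h := forall a, a \in msupp h -> mnm_within V a.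

Lemma exact_part_out V h :
  mpoly_within V h -> forall S, ~~ (S \subset V) -> exact_part S h = 0.
Proof.
move=> h_within S notSV; rewrite exact_part_mlinext /mlinext big1_seq // => a /= ha.
by rewrite (exact_part_mnm_out (h_within a ha) notSV) scaler0.
Qed.

Lemma exact_partM S V1 V2 f g :
  [disjoint V1 & V2] -> mpoly_within V1 f -> mpoly_within V2 g ->
  exact_part S (f * g) =
  if S \subset V1 :|: V2 then exact_part (S :&: V1) f * exact_part (S :&: V2) g
  else 0.
Proof.
move=> disV f_within g_within.
rewrite !exact_part_mlinext mpolyME mlinext_sum big_allpairs /=.
case: ifP => [subS | /negbT notS].
  rewrite /mlinext mulr_suml; apply: eq_big_seq => a fa.
  rewrite mulr_sumr; apply: eq_big_seq => b gb.
  rewrite (exact_part_mnmD disV subS (f_within a fa) (g_within b gb)).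
  by rewrite -scalerAl -scalerAr scalerA.
rewrite big1_seq // => a /= fa; rewrite big1_seq // => b /= gb.
have ab_within : mnm_within (V1 :|: V2) (a + b)%MM.
  move=> i; rewrite inE negb_or => /andP [i1 i2].
  by rewrite mnmDE (f_within a fa i i1) (g_within b gb i i2).
by rewrite (exact_part_mnm_out ab_within notS) scaler0.
Qed.

Lemma meval_exact_part V h (v v' : 'I_n -> F) :
  mpoly_within V h -> {in V, v =1 v'} ->
  forall S, meval v (exact_part S h) = meval v' (exact_part S h).
Proof.
move=> h_within eq_vv' S; rewrite /exact_part !raddf_sum /= big_seq_cond.
rewrite [RHS]big_seq_cond; apply: eq_bigr => a /andP [ha _].
rewrite !mevalZ !mevalX; congr (_ * _); apply: eq_bigr => i _.
have [iV | iV] := boolP (i \in V); first by rewrite eq_vv'.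
by rewrite mnmBE (h_within a ha i iV) sub0n !expr0.
Qed.

End ExactPart.

Section TensorRank.
Variable F : fieldType.

Lemma tens1mx r s : (1%:M : 'M[F]_r) *t (1%:M : 'M[F]_s) = 1%:M.
Proof.
apply/matrixP => i j.
case: (mxtens_indexP i) => i1 i2; case: (mxtens_indexP j) => j1 j2.
rewrite tensmxE !mxE -natrM mulnb.
by rewrite (inj_eq (can_inj (@mxtens_indexK _ _))) xpair_eqE.
Qed.

Lemma row_free_tens m1 n1 m2 n2 (A : 'M[F]_(m1, n1)) (B : 'M[F]_(m2, n2)) :
  row_free A -> row_free B -> row_free (A *t B).
Proof.
move=> /row_freeP [A' AA'] /row_freeP [B' BB']; apply/row_freeP.
by exists (A' *t B'); rewrite tensmx_mul AA' BB' tens1mx.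
Qed.

Lemma mxrank_tens m1 n1 m2 n2 (A : 'M[F]_(m1, n1)) (B : 'M[F]_(m2, n2)) :
  \rank (A *t B) = (\rank A * \rank B)%N.
Proof.
have -> : A *t B = (col_base A *t col_base B) *m (row_base A *t row_base B).
  by rewrite tensmx_mul !mulmx_base.
rewrite mxrankMfree; last by apply: row_free_tens; apply: row_base_free.
have col_free (C : 'M[F]_(_, _)) : row_free (col_base C)^T.
  by rewrite /row_free mxrank_tr; apply: col_base_full.
by rewrite -mxrank_tr trmx_tens (eqP (row_free_tens (col_free _ _ A) (col_free _ _ B))).
Qed.

Definition mask_mxsub m n p q (c : 'I_m -> bool) (d : 'I_n -> bool)
    (f : 'I_m -> 'I_p) (g : 'I_n -> 'I_q) (D : 'M[F]_(p, q)) : 'M[F]_(m, n) :=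
  \matrix_(i, j) if c i && d j then D (f i) (g j) else 0.

Lemma mxrank_mask_mxsub m n p q c d f g (D : 'M[F]_(p, q)) :
  (\rank (@mask_mxsub m n p q c d f g D) <= \rank D)%N.
Proof.
have -> : mask_mxsub c d f g D =
    diag_mx (\row_i (c i)%:R) *m (rowsub f 1%:M *m (D *m colsub g 1%:M))
    *m diag_mx (\row_j (d j)%:R).
  rewrite mulmx_colsub mul_rowsub_mx mul1mx mulmx1 mul_diag_mx mul_mx_diag.
  apply/matrixP => i j; rewrite !mxE.
  by case: (c i) (d j) => [] []; rewrite ?mulr1 ?mul1r ?mulr0 ?mul0r.
apply: leq_trans (mxrankM_maxl _ _) _; apply: leq_trans (mxrankM_maxr _ _) _.
by apply: leq_trans (mxrankM_maxr _ _) _; apply: mxrankM_maxl.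
Qed.

End TensorRank.

Section PcmEntry.
Variables (F : fieldType) (m : nat) (Y Z : {set 'I_m}) (h : {mpoly F[m + m]}).
Hypothesis h_in : poly_in_vars Y Z h.

Lemma pcm_entry_out (P Q : {set 'I_m}) : ~~ ((P \subset Y) && (Q \subset Z)) -> pcm_entry h P Q = 0.
Proof. by move=> notPQ; apply: (exact_part_out h_in); rewrite varset_subset. Qed.

Lemma pcm_eval_agree (v v' : 'I_(m + m) -> F) :
  {in varset Y Z, v =1 v'} -> pcm_eval h v = pcm_eval h v'.
Proof.
move=> eq_vv'; apply/matrixP => i j; rewrite !mxE.
exact: (@meval_exact_part _ _ (varset Y Z) h v v' h_in eq_vv').
Qed.

End PcmEntry.

Lemma setUI_disjoint (T : finType) (A1 A2 B1 B2 : {set T}) :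
  [disjoint B1 & B2] -> A1 \subset B1 -> A2 \subset B2 -> (A1 :|: A2) :&: B1 = A1.
Proof.
move=> disB sA1 sA2; rewrite setIUl (setIidPl sA1).
by rewrite (disjoint_setI0 (disjointWl sA2 _)) ?setU0 // disjoint_sym.
Qed.

Section ProductMatrix.
Variables (F : fieldType) (m : nat) (Y1 Y2 Z1 Z2 : {set 'I_m}).
Variables (f g : {mpoly F[m + m]}).
Hypotheses (disY : [disjoint Y1 & Y2]) (disZ : [disjoint Z1 & Z2]).
Hypotheses (f_in : poly_in_vars Y1 Z1 f) (g_in : poly_in_vars Y2 Z2 g).
Implicit Types P Q : {set 'I_m}.

Lemma pcm_entryM P Q :
  pcm_entry (f * g) P Q =
  if (P \subset Y1 :|: Y2) && (Q \subset Z1 :|: Z2) then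
    pcm_entry f (P :&: Y1) (Q :&: Z1) * pcm_entry g (P :&: Y2) (Q :&: Z2)
  else 0.
Proof.
rewrite /pcm_entry -/(exact_part _ _).
by rewrite (exact_partM _ (disjoint_varset disY disZ) f_in g_in) varsetU varset_subset !varsetI.
Qed.

Lemma pcm_entryM_split P1 P2 Q1 Q2 :
  P1 \subset Y1 -> P2 \subset Y2 -> Q1 \subset Z1 -> Q2 \subset Z2 ->
  pcm_entry (f * g) (P1 :|: P2) (Q1 :|: Q2) = pcm_entry f P1 Q1 * pcm_entry g P2 Q2.
Proof.
have disY' : [disjoint Y2 & Y1] by rewrite disjoint_sym.
have disZ' : [disjoint Z2 & Z1] by rewrite disjoint_sym.
move=> sP1 sP2 sQ1 sQ2; rewrite pcm_entryM !setUSS //=.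
rewrite (setUI_disjoint disY sP1 sP2) (setUI_disjoint disZ sQ1 sQ2).
by rewrite setUC (setUI_disjoint disY' sP2 sP1) [Q1 :|: _]setUC (setUI_disjoint disZ' sQ2 sQ1).
Qed.

Variable v : 'I_(m + m) -> F.
Let N := #|{set 'I_m}|.
Let ev (i : 'I_N) : {set 'I_m} := enum_val i.
Let er (P : {set 'I_m}) : 'I_N := enum_rank P.
Let A := pcm_eval f v.
Let B := pcm_eval g v.
Let C := pcm_eval (f * g) v.

Lemma pcm_evalM_mask :
  C = mask_mxsub (fun i => ev i \subset Y1 :|: Y2) (fun j => ev j \subset Z1 :|: Z2)
        (fun i => mxtens_index (er (ev i :&: Y1), er (ev i :&: Y2)))
        (fun j => mxtens_index (er (ev j :&: Z1), er (ev j :&: Z2)))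
        (A *t B).
Proof.
apply/matrixP => i j; rewrite /C /A /B !mxE pcm_entryM.
case: ifP => _; last by rewrite meval0.
by rewrite !mxtens_indexK /er !enum_rankK mevalM.
Qed.

Lemma tens_pcm_eval_mask :
  A *t B = mask_mxsub
    (fun k => (ev (mxtens_unindex k).1 \subset Y1) && (ev (mxtens_unindex k).2 \subset Y2))
    (fun l => (ev (mxtens_unindex l).1 \subset Z1) && (ev (mxtens_unindex l).2 \subset Z2))
    (fun k => er (ev (mxtens_unindex k).1 :|: ev (mxtens_unindex k).2))
    (fun l => er (ev (mxtens_unindex l).1 :|: ev (mxtens_unindex l).2))
    C.
Proof.
apply/matrixP => k l; rewrite !mxE.
case: (mxtens_indexP k) => k1 k2; case: (mxtens_indexP l) => l1 l2.
rewrite !mxtens_indexK /= /er /ev !enum_rankK.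
set P1 := enum_val k1; set P2 := enum_val k2; set Q1 := enum_val l1; set Q2 := enum_val l2.
have [/andP [sP1 sQ1] | notf] := boolP ((P1 \subset Y1) && (Q1 \subset Z1)); last first.
  rewrite (pcm_entry_out f_in notf) meval0 mul0r ifF //.
  by apply: contraNF notf => /andP [/andP [-> _] /andP [-> _]].
have [/andP [sP2 sQ2] | notg] := boolP ((P2 \subset Y2) && (Q2 \subset Z2)); last first.
  rewrite (pcm_entry_out g_in notg) meval0 mulr0 ifF //.
  by apply: contraNF notg => /andP [/andP [_ ->] /andP [_ ->]].
by rewrite sP1 sP2 sQ1 sQ2 pcm_entryM_split // mevalM.
Qed.

Lemma mxrank_pcm_evalM : \rank C = (\rank A * \rank B)%N.
Proof.
rewrite -mxrank_tens; apply/eqP; rewrite eqn_leq; apply/andP; split.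
  by rewrite pcm_evalM_mask mxrank_mask_mxsub.
by rewrite tens_pcm_eval_mask mxrank_mask_mxsub.
Qed.

End ProductMatrix.

Section MaxRank.
Variables (F : fieldType) (m : nat) (h : {mpoly F[m + m]}).

Lemma rank_realizedP k :
  reflect (exists v, \rank (pcm_eval h v) = k) (rank_realized h k).
Proof. by rewrite /rank_realized; case: excluded_middle_informative => H; constructor. Qed.

Lemma rank_pcm_eval_lt v : (\rank (pcm_eval h v) < #|{set 'I_m}|.+1)%N.
Proof. by rewrite ltnS rank_leq_row. Qed.

Lemma rank_pcm_eval_le_maxrank v : (\rank (pcm_eval h v) <= maxrank h)%N.
Proof.
apply: (@leq_bigmax_cond _ _ _ (Ordinal (rank_pcm_eval_lt v))).
by apply/rank_realizedP; exists v.
Qed.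

Lemma maxrank_attained : exists v, \rank (pcm_eval h v) = maxrank h.
Proof.
have realized_some : (0 < #|[pred k : 'I_(#|{set 'I_m}|).+1 | rank_realized h k]|)%N.
  apply/card_gt0P; exists (Ordinal (rank_pcm_eval_lt (fun _ => 0))).
  by apply/rank_realizedP; exists (fun _ => 0).
have [k /rank_realizedP [v rank_v] max_k] :=
  eq_bigmax_cond (fun k : 'I__ => nat_of_ord k) realized_some.
by exists v; rewrite rank_v /maxrank max_k.
Qed.

End MaxRank.

Theorem proposition3 (F : fieldType) (m : nat)
    (Y1 Y2 Z1 Z2 : {set 'I_m}) (f g : {mpoly F[m + m]}) :
  [disjoint Y1 & Y2] -> [disjoint Z1 & Z2] ->
  poly_in_vars Y1 Z1 f -> poly_in_vars Y2 Z2 g ->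
  maxrank (f * g) = (maxrank f * maxrank g)%N.
Proof.
move=> disY disZ f_in g_in.
have rankM := mxrank_pcm_evalM disY disZ f_in g_in.
apply/eqP; rewrite eqn_leq; apply/andP; split.
  have [v <-] := maxrank_attained (f * g).
  by rewrite rankM leq_mul ?rank_pcm_eval_le_maxrank.
have [v1 <-] := maxrank_attained f; have [v2 <-] := maxrank_attained g.
pose v i := if i \in varset Y1 Z1 then v1 i else v2 i.
have -> : pcm_eval f v1 = pcm_eval f v.
  by apply: (pcm_eval_agree f_in) => i i1; rewrite /v i1.
have -> : pcm_eval g v2 = pcm_eval g v.
  apply: (pcm_eval_agree g_in) => i i2.
  by rewrite /v (disjointFl (disjoint_varset disY disZ) i2).
by rewrite -rankM rank_pcm_eval_le_maxrank.
Qed.
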